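(* Let $G$ be a connected unicyclic graph with largest vertex degree $\Delta=3$ and let $\alpha\in(0,1)$. If $k(G)=3$ and $\alpha>\frac{-\gamma_0}{2-\gamma_0}$, or if $k(G)=2$ and $\alpha>\frac{-\delta_0}{2-\delta_0}$, then \[ \rho(A_\alpha(G))<3\alpha+2(1-\alpha)\sqrt{2}\cos\frac{\pi}{2k(G)+1}. \]
   Context: $A_\alpha(G)=\alpha D(G)+(1-\alpha)A(G)$ ($D$ degree matrix, $A$ adjacency matrix), and $\rho(M)$ is the spectral radius (largest eigenvalue) of a symmetric matrix $M$. A unicyclic graph is a connected graph with exactly one cycle; if $C_r$ is its cycle with vertices $v_1,\dots,v_r$, removing the cycle edges leaves trees $T_1,\dots,T_r$ rooted at $v_1,\dots,v_r$, $h(T_i)$ is the largest distance from $v_i$ to a vertex of $T_i$, and $k(G)=\max_i h(T_i)+1$. Let $Z(\gamma)=\begin{pmatrix}\gamma&\sqrt2&0\\ \sqrt2&0&1\\ 0&1&2\end{pmatrix}$ and $W(\delta)=\begin{pmatrix}\delta&1\\1&2\end{pmatrix}$. $\gamma_0$ is the unique real number (it lies in $(-0.25,-0.2)$) with $\rho(Z(\gamma_0))=2\sqrt2\cos\frac{\pi}{7}$, and $\delta_0$ is the unique real number (it lies in $(-1.2,-1.1)$) with $\rho(W(\delta_0))=2\sqrt2\cos\frac{\pi}{5}$. *)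

From Stdlib Require Import Reals List Arith Lia Lra.
Import ListNotations.
Open Scope bool_scope.
Open Scope R_scope.

Definition simple_graph (n : nat) (adj : nat -> nat -> bool) : Prop :=
  (forall i j, adj i j = adj j i) /\
  (forall i, adj i i = false) /\
  (forall i j, adj i j = true -> (i < n)%nat /\ (j < n)%nat).

Definition degree (n : nat) (adj : nat -> nat -> bool) (i : nat) : nat :=
  length (filter (adj i) (seq 0 n)).

Definition max_degree (n : nat) (adj : nat -> nat -> bool) (D : nat) : Prop :=
  (forall i, (i < n)%nat -> (degree n adj i <= D)%nat) /\
  (exists i, (i < n)%nat /\ degree n adj i = D).

(** [is_walk adj x p]: x, p_1, ..., p_m is a walk (consecutive vertices adjacent);
    it ends at [last p x] and has length [length p]. *)
Fixpoint is_walk (adj : nat -> nat -> bool) (x : nat) (p : list nat) : bool :=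
  match p with
  | [] => true
  | y :: p' => adj x y && is_walk adj y p'
  end.

Definition connected (n : nat) (adj : nat -> nat -> bool) : Prop :=
  forall u v, (u < n)%nat -> (v < n)%nat ->
    exists p, is_walk adj u p = true /\ last p u = v.

Definition is_cycle (adj : nat -> nat -> bool) (c : list nat) : Prop :=
  (3 <= length c)%nat /\ NoDup c /\
  exists v rest, c = v :: rest /\ is_walk adj v rest = true /\ adj (last rest v) v = true.

Definition cyc_edgeb (c : list nat) (x y : nat) : bool :=
  existsb (fun i =>
      orb (Nat.eqb (nth i c 0%nat) x && Nat.eqb (nth ((i + 1) mod length c) c 0%nat) y)
   (Nat.eqb (nth i c 0%nat) y && Nat.eqb (nth ((i + 1) mod length c) c 0%nat) x))
    (seq 0 (length c)).

(** Unicyclic: connected with exactly one cycle (cycles = subgraphs, i.e. determined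
    by their edge sets). *)
Definition unicyclic (n : nat) (adj : nat -> nat -> bool) : Prop :=
  connected n adj /\
  exists c, is_cycle adj c /\
    forall c', is_cycle adj c' -> forall x y, cyc_edgeb c' x y = cyc_edgeb c x y.

(** Graph with the cycle edges removed: its component containing v_i is T_i. *)
Definition del_cycle (adj : nat -> nat -> bool) (c : list nat) : nat -> nat -> bool :=
  fun x y => adj x y && negb (cyc_edgeb c x y).

Definition dist (adj : nat -> nat -> bool) (u v d : nat) : Prop :=
  (exists p, is_walk adj u p = true /\ last p u = v /\ length p = d) /\
  (forall p, is_walk adj u p = true -> last p u = v -> (d <= length p)%nat).

(** k = max_i h(T_i) + 1, where h(T_i) = largest distance from v_i to a vertex of T_i
    (T_i = component of v_i in G minus the cycle edges). *)
Definition kG (adj : nat -> nat -> bool) (c : list nat) (k : nat) : Prop :=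
  (1 <= k)%nat /\
  (exists i u, In i c /\ dist (del_cycle adj c) i u (k - 1)) /\
  (forall i u d, In i c -> dist (del_cycle adj c) i u d -> (d <= k - 1)%nat).

Definition k_of (adj : nat -> nat -> bool) (k : nat) : Prop :=
  exists c, is_cycle adj c /\ kG adj c k.

Definition rsum (n : nat) (f : nat -> R) : R :=
  fold_right Rplus 0 (map f (seq 0 n)).

Definition is_eigenvalue (n : nat) (M : nat -> nat -> R) (l : R) : Prop :=
  exists x : nat -> R, (exists i, (i < n)%nat /\ x i <> 0) /\
    forall i, (i < n)%nat -> rsum n (fun j => M i j * x j) = l * x i.

Definition is_rho (n : nat) (M : nat -> nat -> R) (r : R) : Prop :=
  is_eigenvalue n M r /\ forall l, is_eigenvalue n M l -> l <= r.

Definition A_alpha (n : nat) (adj : nat -> nat -> bool) (alpha : R) : nat -> nat -> R :=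
  fun i j =>
    alpha * (if Nat.eqb i j then INR (degree n adj i) else 0)
    + (1 - alpha) * (if adj i j then 1 else 0).

Definition Zmat (g : R) : nat -> nat -> R :=
  fun i j =>
    match i, j with
    | O, O => g | O, S O => sqrt 2 | S O, O => sqrt 2
    | S O, S (S O) => 1 | S (S O), S O => 1 | S (S O), S (S O) => 2
    | _, _ => 0 end.

Definition Wmat (d : R) : nat -> nat -> R :=
  fun i j =>
    match i, j with
    | O, O => d | O, S O => 1 | S O, O => 1 | S O, S O => 2
    | _, _ => 0 end.

From Pilot Require Import Defs.
From Stdlib Require Import Reals List Lia Lra Classical ClassicalEpsilon Wf_nat.
Import ListNotations.
Open Scope R_scope.

(* A nonnegative matrix admitting a positive vector [y] with [M y < B y] entrywise has all its
   eigenvalues below [B] (Collatz-Wielandt).  We take [y v = F (depth v)], where [depth v] is the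
   distance from the cycle in the forest obtained by deleting the cycle edges.  Since every
   non-cycle edge of a unicyclic graph is a bridge, a cycle vertex has at most two neighbours of
   depth 0 (all others have depth 1), and a vertex of depth [d >= 1] has exactly one neighbour of
   depth at most [d], its parent, the others having depth [d + 1].  With maximum degree 3 the row
   inequalities thus reduce to three scalar inequalities on [F 0, ..., F (k - 1)].  For
   [lam = 2 sqrt 2 cos (pi / (2k + 1))], the eigen-relation of [Zmat gamma0] (k = 3) or of
   [Wmat delta0] (k = 2) at [lam] shows that they are solvable when
   [2 alpha + (1 - alpha) gamma0 > 0] (resp. [delta0]), which is the hypothesis on [alpha]. *)

Section Walks.

Variable g : nat -> nat -> bool.

Lemma last_cons_cons (p : list nat) x y : last (y :: p) x = last p y.
Proof.
  revert x y; induction p as [|a p IH]; intros x y; auto.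
  change (last (a :: p) x = last (a :: p) y). now rewrite !IH.
Qed.

Lemma last_app_last (p q : list nat) x : last (p ++ q) x = last q (last p x).
Proof.
  revert x; induction p as [|y p IH]; intro x; auto.
  now rewrite <- app_comm_cons, !last_cons_cons.
Qed.

Lemma is_walk_app x p q : is_walk g x (p ++ q) = is_walk g x p && is_walk g (last p x) q.
Proof.
  revert x; induction p as [|y p IH]; intro x; simpl; auto.
  rewrite IH, <- (last_cons_cons p x y). now destruct (g x y).
Qed.

Lemma is_walk_split x p z : In z p -> is_walk g x p = true ->
  exists p1 p2, p = p1 ++ z :: p2 /\ is_walk g x (p1 ++ [z]) = true /\ is_walk g z p2 = true.
Proof.
  intros Hin Hw. apply in_split in Hin as [p1 [p2 ->]]. exists p1, p2.
  replace (p1 ++ z :: p2) with ((p1 ++ [z]) ++ p2) in Hw by now rewrite <- app_assoc.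
  rewrite is_walk_app, last_last in Hw. apply andb_prop in Hw. tauto.
Qed.

Lemma is_walk_prefix_to x p z : In z (x :: p) -> is_walk g x p = true ->
  exists p1 p2, p = p1 ++ p2 /\ last p1 x = z /\ is_walk g x p1 = true.
Proof.
  intros [<-|Hin] Hw; [now exists [], p|].
  destruct (is_walk_split x p z Hin Hw) as [p1 [p2 [-> [Hw1 _]]]].
  exists (p1 ++ [z]), p2. rewrite <- app_assoc, last_last. auto.
Qed.

Lemma is_walk_rev x p : (forall a b, g a b = g b a) -> is_walk g x p = true ->
  exists q, is_walk g (last p x) q = true /\ last q (last p x) = x /\
    (forall z, In z q -> In z (x :: p)).
Proof.
  intro Hs; revert x; induction p as [|y p IH]; intros x Hw.
  - exists []; simpl; repeat split; auto.
  - simpl in Hw; apply andb_prop in Hw as [Hxy Hw].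
    destruct (IH y Hw) as [q [Hq [Hlq Hinq]]].
    rewrite last_cons_cons. exists (q ++ [x]). repeat split.
    + rewrite is_walk_app, Hq, Hlq; simpl. now rewrite Hs, Hxy.
    + apply last_last.
    + intros z Hz. apply in_app_or in Hz as [Hz|[<-|[]]]; [|now left].
      right. now apply Hinq.
Qed.

Lemma is_walk_shorten x p : is_walk g x p = true ->
  exists q, is_walk g x q = true /\ last q x = last p x /\ NoDup (x :: q).
Proof.
  revert x; induction p as [|y p IH]; intros x Hw.
  - exists []; repeat split; auto. repeat constructor; auto.
  - simpl in Hw; apply andb_prop in Hw as [Hxy Hw].
    destruct (IH y Hw) as [q [Hq [Hlq Hnd]]].
    rewrite last_cons_cons.
    destruct (in_dec Nat.eq_dec x (y :: q)) as [[<-|Hin]|Hin].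
    + exists q; repeat split; auto.
    + destruct (is_walk_split y q x Hin Hq) as [q1 [q2 [-> [_ Hq2]]]].
      rewrite last_app_last, last_cons_cons in Hlq.
      exists q2. repeat split; auto.
      apply NoDup_cons_iff in Hnd as [_ Hnd]. now apply NoDup_app_remove_l in Hnd.
    + exists (y :: q). rewrite last_cons_cons; cbn [is_walk]; rewrite Hxy, Hq.
      repeat split; auto. now constructor.
Qed.

Lemma is_walk_of_consecutive x p :
  (forall l1 a b l2, x :: p = l1 ++ a :: b :: l2 -> g a b = true) -> is_walk g x p = true.
Proof.
  revert x; induction p as [|y p IH]; intros x H; simpl; auto.
  rewrite (H [] x y p eq_refl). apply IH.
  intros l1 a b l2 E. apply (H (x :: l1) a b l2). now rewrite E.
Qed.

Lemma is_walk_exit (S : list nat) x p : In x S -> is_walk g x p = true ->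
  exists i q, In i S /\ is_walk g i q = true /\ last q i = last p x /\
    (forall z, In z q -> ~ In z S).
Proof.
  intro Hx. induction p as [|z p IH] using rev_ind; intro Hw.
  - exists x, []. repeat split; auto.
  - rewrite is_walk_app in Hw. apply andb_prop in Hw as [Hw Hz]. simpl in Hz.
    rewrite Bool.andb_true_r in Hz. rewrite last_last.
    destruct (in_dec Nat.eq_dec z S) as [Hin|Hout]; [now exists z, []|].
    destruct (IH Hw) as [i [q [Hi [Hq [Hlq Hq_out]]]]].
    exists i, (q ++ [z]). repeat split; auto.
    + now rewrite is_walk_app, Hq, Hlq; simpl; rewrite Hz.
    + apply last_last.
    + intros y Hy. apply in_app_or in Hy as [Hy|[<-|[]]]; auto.
Qed.

End Walks.

Section WalkInclusion.

Variables g1 g2 : nat -> nat -> bool.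

Lemma is_walk_incl x p :
  (forall a b, g1 a b = true -> g2 a b = true) -> is_walk g1 x p = true -> is_walk g2 x p = true.
Proof.
  intro H; revert x; induction p as [|y p IH]; intros x Hw; simpl in *; auto.
  apply andb_prop in Hw as [H1 H2]. now rewrite H, IH.
Qed.

Lemma is_walk_incl_targets (P : nat -> Prop) x p :
  (forall a b, g1 a b = true -> P b -> g2 a b = true) -> (forall z, In z p -> P z) ->
  is_walk g1 x p = true -> is_walk g2 x p = true.
Proof.
  intro H; revert x; induction p as [|y p IH]; intros x HP Hw; simpl in *; auto.
  apply andb_prop in Hw as [H1 H2]. rewrite H, IH; auto.
Qed.

Lemma is_walk_incl_vertices (P : nat -> Prop) x p :
  (forall a b, g1 a b = true -> P a -> P b -> g2 a b = true) -> (forall z, In z (x :: p) -> P z) ->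
  is_walk g1 x p = true -> is_walk g2 x p = true.
Proof.
  intro H; revert x; induction p as [|y p IH]; intros x HP Hw; simpl in *; auto.
  apply andb_prop in Hw as [H1 H2]. rewrite H, IH; auto.
Qed.

Lemma is_walk_andb x p : is_walk g1 x p = true -> is_walk g2 x p = true ->
  is_walk (fun a b => g1 a b && g2 a b) x p = true.
Proof.
  revert x; induction p as [|y p IH]; intros x H1 H2; simpl in *; auto.
  apply andb_prop in H1 as [H1 H1']. apply andb_prop in H2 as [H2 H2'].
  now rewrite H1, H2, IH.
Qed.

End WalkInclusion.

Section CycleEdges.

Lemma cyc_edgeb_sym c x y : cyc_edgeb c x y = cyc_edgeb c y x.
Proof.
  unfold cyc_edgeb. induction (seq 0 (length c)) as [|i l IH]; simpl; auto.
  now rewrite IH, Bool.orb_comm with (b1 := (_ && _)%bool).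
Qed.

Lemma cyc_edgeb_spec c x y : cyc_edgeb c x y = true <->
  exists i, (i < length c)%nat /\
   ((nth i c 0%nat = x /\ nth ((i + 1) mod length c) c 0%nat = y) \/
    (nth i c 0%nat = y /\ nth ((i + 1) mod length c) c 0%nat = x)).
Proof.
  unfold cyc_edgeb. rewrite existsb_exists. split.
  - intros [i [Hi H]]. apply in_seq in Hi. exists i; split; [lia|].
    apply Bool.orb_true_iff in H as [H|H]; apply andb_prop in H as [H1 H2];
      apply Nat.eqb_eq in H1; apply Nat.eqb_eq in H2; auto.
  - intros [i [Hi H]]. exists i; split; [apply in_seq; lia|].
    apply Bool.orb_true_iff. destruct H as [[H1 H2]|[H1 H2]]; [left|right];
      now rewrite H1, H2, !Nat.eqb_refl.
Qed.

Lemma cyc_edgeb_in c x y : cyc_edgeb c x y = true -> In x c /\ In y c.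
Proof.
  intro H. apply cyc_edgeb_spec in H as [i [Hi H]].
  assert (((i + 1) mod length c < length c)%nat) by (apply Nat.mod_upper_bound; lia).
  destruct H as [[<- <-]|[<- <-]]; split; now apply nth_In.
Qed.

Lemma cyc_edgeb_consecutive c l1 x y l2 : c = l1 ++ x :: y :: l2 -> cyc_edgeb c x y = true.
Proof.
  intro Hc. apply cyc_edgeb_spec. exists (length l1).
  assert (HL : length c = (length l1 + S (S (length l2)))%nat)
    by (subst; now rewrite length_app).
  split; [lia|]. left. split.
  - subst; apply nth_middle.
  - rewrite Nat.mod_small by lia.
    replace c with ((l1 ++ [x]) ++ y :: l2) by (subst; now rewrite <- app_assoc).
    replace (length l1 + 1)%nat with (length (l1 ++ [x])) by (rewrite length_app; simpl; lia).
    apply nth_middle.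
Qed.

Lemma cyc_edgeb_closing v0 r z : cyc_edgeb ((v0 :: r) ++ [z]) z v0 = true.
Proof.
  apply cyc_edgeb_spec. exists (length (v0 :: r)).
  rewrite length_app. simpl (length [z]).
  split; [lia|]. left. split; [apply nth_middle|].
  now rewrite Nat.Div0.mod_same.
Qed.

Lemma cyc_edgeb_neighbours c v : NoDup c -> In v c ->
  exists a b, forall u, cyc_edgeb c v u = true -> u = a \/ u = b.
Proof.
  intros Hnd Hv.
  destruct (In_nth c v 0%nat Hv) as [iv [Hiv Hnv]].
  set (L := length c) in *.
  exists (nth ((iv + 1) mod L) c 0%nat),
    (if Nat.eqb iv 0 then nth (L - 1) c 0%nat else nth (iv - 1) c 0%nat).
  intros u Hvu.
  apply cyc_edgeb_spec in Hvu as [i [Hi H]]. fold L in Hi, H.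
  assert (Hm : ((i + 1) mod L < L)%nat) by (apply Nat.mod_upper_bound; lia).
  destruct H as [[H1 H2]|[H1 H2]].
  - left. assert (i = iv) by (apply (NoDup_nth c 0%nat); auto; congruence). now subst.
  - right. assert (Hi2 : ((i + 1) mod L)%nat = iv) by (apply (NoDup_nth c 0%nat); auto; congruence).
    destruct (Nat.lt_ge_cases (i + 1) L).
    + rewrite Nat.mod_small in Hi2 by lia. subst iv.
      replace (Nat.eqb (i + 1) 0) with false by (symmetry; apply Nat.eqb_neq; lia).
      now replace (i + 1 - 1)%nat with i by lia.
    + replace (i + 1)%nat with L in Hi2 by lia.
      rewrite Nat.Div0.mod_same in Hi2. subst iv. simpl.
      now replace (L - 1)%nat with i by lia.
Qed.

End CycleEdges.

Lemma cycle_walk_within (g : nat -> nat -> bool) v0 rest x y :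
  is_walk g v0 rest = true -> g (last rest v0) v0 = true ->
  In x (v0 :: rest) -> In y (v0 :: rest) ->
  exists p, is_walk g x p = true /\ last p x = y /\ (forall z, In z p -> In z (v0 :: rest)).
Proof.
  intros Hw Hc Hx Hy.
  assert (Hto : exists p, is_walk g x p = true /\ last p x = v0 /\
                          (forall z, In z p -> In z (v0 :: rest))).
  { destruct Hx as [<-|Hx]; [exists []; repeat split; auto; intros z []|].
    destruct (is_walk_split g v0 rest x Hx Hw) as [l1 [l2 [-> [_ Hw2]]]].
    rewrite last_app_last, last_cons_cons in Hc.
    exists (l2 ++ [v0]). repeat split.
    - rewrite is_walk_app, Hw2; simpl. now rewrite Hc.
    - apply last_last.
    - intros z Hz. apply in_app_or in Hz as [Hz|[<-|[]]]; [|now left].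
      right. apply in_or_app. right. now right. }
  assert (Hfrom : exists p, is_walk g v0 p = true /\ last p v0 = y /\
                            (forall z, In z p -> In z (v0 :: rest))).
  { destruct (is_walk_prefix_to g v0 rest y Hy Hw) as [p1 [p2 [E [Hl Hw1]]]].
    exists p1; repeat split; auto. intros z Hz; right; rewrite E; apply in_or_app; auto. }
  destruct Hto as [p [Hp [Hlp Hinp]]]. destruct Hfrom as [q [Hq [Hlq Hinq]]].
  exists (p ++ q). repeat split.
  - now rewrite is_walk_app, Hp, Hlp.
  - now rewrite last_app_last, Hlp.
  - intros z Hz; apply in_app_or in Hz as [Hz|Hz]; auto.
Qed.

Definition del_edge (adj : nat -> nat -> bool) (a b : nat) : nat -> nat -> bool :=
  fun x y => adj x y && negb ((Nat.eqb x a && Nat.eqb y b) || (Nat.eqb x b && Nat.eqb y a)).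

Definition unique_cycle (adj : nat -> nat -> bool) (c : list nat) : Prop :=
  forall c', is_cycle adj c' -> forall x y, cyc_edgeb c' x y = cyc_edgeb c x y.

Section UniqueCycle.

Variables (adj : nat -> nat -> bool) (c : list nat).
Hypothesis adj_sym : forall i j, adj i j = adj j i.
Hypothesis adj_irrefl : forall i, adj i i = false.
Hypothesis c_cycle : is_cycle adj c.
Hypothesis c_unique : unique_cycle adj c.

(* A shortest walk from [a] to [b] avoiding the edge [ab], closed by [ba], would be a second
   cycle. *)
Lemma non_cycle_edge_is_bridge a b : adj a b = true -> cyc_edgeb c a b = false ->
  forall p, is_walk (del_edge adj a b) a p = true -> last p a <> b.
Proof.
  intros Hab Hc p Hp Hl.
  destruct (is_walk_shorten _ _ _ Hp) as [q [Hq [Hlq Hnd]]].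
  rewrite Hl in Hlq; clear Hl Hp.
  destruct q as [|b1 [|b2 q]].
  - simpl in Hlq. subst. now rewrite adj_irrefl in Hab.
  - simpl in Hlq, Hq. subst. unfold del_edge in Hq.
    now rewrite Hab, !Nat.eqb_refl in Hq.
  - assert (Hcyc : is_cycle adj (a :: b1 :: b2 :: q)).
    { split; [simpl; lia|]. split; auto.
      exists a, (b1 :: b2 :: q). repeat split; auto.
      - eapply is_walk_incl; [|exact Hq]. intros x y H. unfold del_edge in H.
        apply andb_prop in H; tauto.
      - now rewrite Hlq, adj_sym. }
    destruct (exists_last (l := b1 :: b2 :: q) ltac:(discriminate)) as [r [z Hr]].
    rewrite Hr, last_last in Hlq. subst z.
    assert (Hba : cyc_edgeb (a :: b1 :: b2 :: q) b a = true)
      by (rewrite Hr; apply cyc_edgeb_closing).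
    rewrite (c_unique _ Hcyc), cyc_edgeb_sym in Hba. congruence.
Qed.

Lemma cycle_chord_free v u : In v c -> In u c -> adj v u = true -> cyc_edgeb c v u = true.
Proof.
  intros Hv Hu Hvu.
  destruct (cyc_edgeb c v u) eqn:Ecu; auto. exfalso.
  destruct c_cycle as [Hlen [_ [v0 [rest [Ec [Hw Hcl]]]]]].
  set (g := fun x y => adj x y && cyc_edgeb c x y).
  assert (Hgw : is_walk g v0 rest = true).
  { apply is_walk_andb; auto. apply is_walk_of_consecutive.
    intros l1 a b l2 E. apply (cyc_edgeb_consecutive c l1 a b l2). congruence. }
  assert (Hgc : g (last rest v0) v0 = true).
  { unfold g. rewrite Hcl. simpl.
    destruct (exists_last (l := rest)) as [r [z ->]];
      [intros ->; subst c; simpl in Hlen; lia|].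
    rewrite last_last, Ec, app_comm_cons. apply cyc_edgeb_closing. }
  rewrite Ec in Hv, Hu.
  destruct (cycle_walk_within g v0 rest v u Hgw Hgc Hv Hu) as [p [Hp [Hlp _]]].
  apply (non_cycle_edge_is_bridge v u Hvu Ecu p); auto.
  apply (is_walk_incl g); [|exact Hp]. intros a b Hab. unfold g, del_edge in *.
  apply andb_prop in Hab as [H1 H2]. rewrite H1. simpl.
  destruct (Nat.eqb_spec a v) as [Eav|]; destruct (Nat.eqb_spec b u) as [Ebu|]; simpl;
    [rewrite Eav, Ebu in H2; congruence| | |];
  destruct (Nat.eqb_spec a u) as [Eau|]; destruct (Nat.eqb_spec b v) as [Ebv|]; simpl; auto;
  rewrite Eau, Ebv, cyc_edgeb_sym in H2; congruence.
Qed.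

End UniqueCycle.

Definition reaches_from_cycle (adj : nat -> nat -> bool) (c : list nat) (v m : nat) : Prop :=
  exists i p, In i c /\ is_walk (del_cycle adj c) i p = true /\ last p i = v /\ length p = m.

(* The distance from the cycle to [v] inside the forest [G - E(C)], i.e. the depth of [v] in its
   tree [T_i]; it is [0] when no such walk exists, which does not happen in a connected graph. *)
Definition depth (adj : nat -> nat -> bool) (c : list nat) (v : nat) : nat :=
  epsilon (inhabits 0%nat) (fun m => reaches_from_cycle adj c v m /\
    forall m', reaches_from_cycle adj c v m' -> (m <= m')%nat).

Lemma depth_spec adj c v : (exists m, reaches_from_cycle adj c v m) ->
  reaches_from_cycle adj c v (depth adj c v) /\
  forall m, reaches_from_cycle adj c v m -> (depth adj c v <= m)%nat.
Proof.
  intro H.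
  destruct (dec_inh_nat_subset_has_unique_least_element _ (fun m => classic _) H)
    as [m [Hm _]].
  exact (epsilon_spec _ (fun m => reaches_from_cycle adj c v m /\
    forall m', reaches_from_cycle adj c v m' -> (m <= m')%nat) (ex_intro _ m Hm)).
Qed.

Lemma depth_le_walk adj c i p : In i c -> is_walk (del_cycle adj c) i p = true ->
  (depth adj c (last p i) <= length p)%nat.
Proof.
  intros Hi Hp. assert (H : reaches_from_cycle adj c (last p i) (length p)) by now exists i, p.
  apply depth_spec; eauto.
Qed.

Lemma short_walk_avoids adj c i p v : In i c -> is_walk (del_cycle adj c) i p = true ->
  (length p <= depth adj c v)%nat -> last p i <> v -> ~ In v (i :: p).
Proof.
  intros Hi Hp Hlen Hlast Hv.
  destruct (is_walk_prefix_to _ i p v Hv Hp) as [p1 [p2 [-> [Hl1 Hw1]]]].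
  destruct p2 as [|z p2]; [rewrite app_nil_r in Hlast; congruence|].
  pose proof (depth_le_walk adj c i p1 Hi Hw1) as Hd. rewrite Hl1 in Hd.
  rewrite length_app in Hlen. simpl in Hlen. lia.
Qed.

Lemma del_cycle_sym adj c : (forall i j, adj i j = adj j i) ->
  forall x y, del_cycle adj c x y = del_cycle adj c y x.
Proof. intros Hs x y. unfold del_cycle. now rewrite Hs, cyc_edgeb_sym. Qed.

Lemma del_cycle_sub adj c x y : del_cycle adj c x y = true -> adj x y = true.
Proof. unfold del_cycle. intro H. apply andb_prop in H; tauto. Qed.

Lemma del_cycle_off_cycle adj c x y : adj x y = true -> ~ In x c \/ ~ In y c ->
  del_cycle adj c x y = true.
Proof.
  intros H Hxy. unfold del_cycle. rewrite H.
  destruct (cyc_edgeb c x y) eqn:E; auto. apply cyc_edgeb_in in E. tauto.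
Qed.

Section Depth.

Variables (n : nat) (adj : nat -> nat -> bool) (c : list nat).
Hypothesis G_simple : simple_graph n adj.
Hypothesis G_connected : connected n adj.
Hypothesis c_cycle : is_cycle adj c.
Hypothesis c_unique : unique_cycle adj c.

Lemma reaches_from_cycle_exists v : (v < n)%nat -> exists m, reaches_from_cycle adj c v m.
Proof.
  intro Hv. destruct G_simple as [_ [_ Hb]].
  destruct c_cycle as [Hlen [_ [v0 [[|b1 rest] [Ec [Hw _]]]]]];
    [rewrite Ec in Hlen; simpl in Hlen; lia|].
  simpl in Hw. apply andb_prop in Hw as [Hvb _].
  destruct (G_connected v0 v (proj1 (Hb _ _ Hvb)) Hv) as [p [Hp Hl]].
  destruct (is_walk_exit adj c v0 p) as [i [q [Hi [Hq [Hlq Hout]]]]]; auto.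
  { rewrite Ec; now left. }
  exists (length q), i, q. repeat split; auto; [|congruence].
  apply (is_walk_incl_targets adj _ (fun z => ~ In z c)) with (x := i) (p := q); auto.
  intros a b Hab Hb'. apply del_cycle_off_cycle; auto.
Qed.

Lemma depth_eq0_iff v : (v < n)%nat -> depth adj c v = 0%nat <-> In v c.
Proof.
  intro Hv. destruct (depth_spec adj c v (reaches_from_cycle_exists v Hv))
    as [[i [p [Hi [_ [Hl Hlen]]]]] Hmin].
  split.
  - intro H0. rewrite H0 in Hlen. destruct p; [|discriminate]. simpl in Hl. now subst.
  - intro Hvc. assert (H : reaches_from_cycle adj c v 0) by now exists v, [].
    specialize (Hmin 0%nat H). lia.
Qed.

Lemma depth_le_succ u v : (u < n)%nat -> del_cycle adj c u v = true ->
  (depth adj c v <= depth adj c u + 1)%nat.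
Proof.
  intros Hu Huv. destruct (depth_spec adj c u (reaches_from_cycle_exists u Hu))
    as [[i [p [Hi [Hw [Hl Hlen]]]]] _].
  assert (Hpv : is_walk (del_cycle adj c) i (p ++ [v]) = true)
    by (rewrite is_walk_app, Hw, Hl; simpl; now rewrite Huv).
  pose proof (depth_le_walk adj c i _ Hi Hpv) as H.
  rewrite last_last, length_app in H. simpl in H. lia.
Qed.

Lemma depth_le_k k v : kG adj c k -> (v < n)%nat -> (depth adj c v <= k - 1)%nat.
Proof.
  intros [_ [_ Hk]] Hv.
  destruct (depth_spec adj c v (reaches_from_cycle_exists v Hv))
    as [[i [p [Hi [Hw [Hl _]]]]] _].
  destruct (dec_inh_nat_subset_has_unique_least_element
    (fun m => exists p, is_walk (del_cycle adj c) i p = true /\ last p i = v /\ length p = m)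
    (fun m => classic _) (ex_intro _ _ (ex_intro _ p (conj Hw (conj Hl eq_refl)))))
    as [d [[[q [Hq [Hlq Hd]]] Hmin] _]].
  assert (Hdist : Defs.dist (del_cycle adj c) i v d).
  { split; [now exists q|]. intros p' Hp' Hl'. apply Hmin. now exists p'. }
  specialize (Hk i v d Hi Hdist).
  pose proof (depth_le_walk adj c i q Hi Hq). rewrite Hlq in *. lia.
Qed.

Lemma cycle_vertex_neighbours v : In v c ->
  exists a b, forall u, adj v u = true -> depth adj c u = 0%nat -> u = a \/ u = b.
Proof.
  intro Hv. pose proof G_simple as [Hs [Hirr Hb]].
  destruct (cyc_edgeb_neighbours c v (proj1 (proj2 c_cycle)) Hv) as [a [b Hab]].
  exists a, b. intros u Hvu Hu0. apply Hab.
  apply cycle_chord_free with (adj := adj); auto.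
  apply (depth_eq0_iff u); auto. exact (proj2 (Hb v u Hvu)).
Qed.

Lemma depth_parent v : (v < n)%nat -> (1 <= depth adj c v)%nat ->
  exists i p, In i c /\ is_walk (del_cycle adj c) i p = true /\
    (length p + 1 = depth adj c v)%nat /\ del_cycle adj c (last p i) v = true.
Proof.
  intros Hv Hdv.
  destruct (depth_spec adj c v (reaches_from_cycle_exists v Hv))
    as [[i [p [Hi [Hw [Hl Hlen]]]]] _].
  destruct (exists_last (l := p)) as [p' [v' ->]]; [intros ->; simpl in Hlen; lia|].
  rewrite last_last in Hl. subst v'.
  rewrite is_walk_app in Hw. apply andb_prop in Hw as [Hw' Hwv]. simpl in Hwv.
  rewrite Bool.andb_true_r in Hwv. rewrite length_app in Hlen.
  now exists i, p'.
Qed.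

(* The parent [w] of [v] is the second-to-last vertex of a shortest walk from the cycle to [v].
   Any other neighbour [u] of depth at most that of [v] would give a walk from [v] to [w] avoiding
   the bridge [vw]: to [u], back to the cycle, around it, and down to [w]. *)
Lemma depth_parent_unique v : (v < n)%nat -> (1 <= depth adj c v)%nat ->
  exists w, forall u, adj v u = true -> (depth adj c u <= depth adj c v)%nat -> u = w.
Proof.
  intros Hv Hdv. pose proof G_simple as [Hs [Hirr Hb]].
  assert (Hvc : ~ In v c) by (intro H; apply (depth_eq0_iff v Hv) in H; lia).
  destruct (depth_parent v Hv Hdv) as [i [p' [Hi [Hw' [Hlen Hwv]]]]].
  set (w := last p' i) in *.
  exists w. intros u Hvu Hu.
  destruct (Nat.eq_dec u w) as [|Huw]; auto. exfalso.
  assert (Huv : u <> v) by (intros ->; now rewrite Hirr in Hvu).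
  assert (Hwv' : w <> v)
    by (intros Ewv; rewrite Ewv in Hwv; apply del_cycle_sub in Hwv; now rewrite Hirr in Hwv).
  destruct (depth_spec adj c u (reaches_from_cycle_exists u (proj2 (Hb v u Hvu))))
    as [[j [q [Hj [Hq [Hlq Hlenq]]]]] _].
  assert (Hv_q : ~ In v (j :: q)) by (apply (short_walk_avoids adj c); auto; congruence).
  assert (Hv_p : ~ In v (i :: p')) by (apply (short_walk_avoids adj c); auto; lia).
  destruct (is_walk_rev _ j q (del_cycle_sym adj c Hs) Hq) as [qr [Hqr [Hlqr Hinqr]]].
  rewrite Hlq in Hqr, Hlqr.
  destruct c_cycle as [_ [_ [v0 [rest [Ec [Hcw Hcc]]]]]].
  destruct (cycle_walk_within adj v0 rest j i Hcw Hcc) as [cw [Hcw1 [Hcw2 Hincw]]];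
    try (rewrite <- Ec; auto).
  rewrite <- Ec in Hincw.
  apply (non_cycle_edge_is_bridge adj c Hs Hirr c_unique v w)
    with (p := u :: qr ++ cw ++ p').
  - rewrite Hs. exact (del_cycle_sub _ _ _ _ Hwv).
  - destruct (cyc_edgeb c v w) eqn:E; auto. apply cyc_edgeb_in in E. tauto.
  - cbn [is_walk]. apply andb_true_intro. split.
    + unfold del_edge. rewrite Hvu, Nat.eqb_refl.
      destruct (Nat.eqb_spec u w), (Nat.eqb_spec u v); try congruence.
      now rewrite !Bool.andb_false_r.
    + apply (is_walk_incl_vertices adj _ (fun z => z <> v)).
      * intros a b Hab Ha Hb'. unfold del_edge. rewrite Hab.
        destruct (Nat.eqb_spec a v), (Nat.eqb_spec b v); try congruence.
        now rewrite !Bool.andb_false_r.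
      * intros z [<-|Hz] ->; [easy|].
        apply in_app_or in Hz as [Hz|Hz]; [now apply Hv_q, Hinqr|].
        apply in_app_or in Hz as [Hz|Hz]; [now apply Hvc, Hincw|].
        now apply Hv_p; right.
      * rewrite !is_walk_app, Hlqr, Hcw2, Hcw1.
        rewrite (is_walk_incl _ adj _ _ (del_cycle_sub adj c) Hqr).
        now rewrite (is_walk_incl _ adj _ _ (del_cycle_sub adj c) Hw').
  - now rewrite last_cons_cons, !last_app_last, Hlqr, Hcw2.
Qed.

End Depth.

Definition lsum (l : list nat) (f : nat -> R) : R := fold_right Rplus 0 (map f l).

Lemma lsum_nil f : lsum [] f = 0.
Proof. reflexivity. Qed.

Lemma lsum_cons a l f : lsum (a :: l) f = f a + lsum l f.
Proof. reflexivity. Qed.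

Lemma lsum_ext l f g : (forall x, In x l -> f x = g x) -> lsum l f = lsum l g.
Proof. intro H. unfold lsum. now rewrite (map_ext_in f g l H). Qed.

Lemma lsum_le l f g : (forall x, In x l -> f x <= g x) -> lsum l f <= lsum l g.
Proof.
  induction l as [|a l IH]; intro H; rewrite ?lsum_nil, ?lsum_cons; [lra|].
  apply Rplus_le_compat; [apply H; now left|apply IH; intros; apply H; now right].
Qed.

Lemma Rabs_lsum_le l f : Rabs (lsum l f) <= lsum l (fun x => Rabs (f x)).
Proof.
  induction l as [|a l IH]; rewrite ?lsum_nil, ?lsum_cons; [rewrite Rabs_R0; lra|].
  eapply Rle_trans; [apply Rabs_triang|]. lra.
Qed.

Lemma lsum_scal l f a : lsum l (fun x => a * f x) = a * lsum l f.
Proof. induction l as [|b l IH]; rewrite ?lsum_nil, ?lsum_cons; [ring|]. rewrite IH; ring. Qed.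

Lemma lsum_plus l f g : lsum l (fun x => f x + g x) = lsum l f + lsum l g.
Proof. induction l as [|b l IH]; rewrite ?lsum_nil, ?lsum_cons; [ring|]. rewrite IH; ring. Qed.

Lemma lsum_indicator l (p : nat -> bool) f :
  lsum l (fun x => (if p x then 1 else 0) * f x) = lsum (filter p l) f.
Proof.
  induction l as [|b l IH]; simpl; rewrite ?lsum_nil, ?lsum_cons; [ring|].
  destruct (p b); rewrite ?lsum_cons, IH; ring.
Qed.

Lemma lsum_delta l v a : NoDup l -> In v l ->
  lsum l (fun x => if Nat.eqb v x then a else 0) = a.
Proof.
  induction l as [|b l IH]; intros Hnd Hv; [destruct Hv|]. rewrite lsum_cons.
  apply NoDup_cons_iff in Hnd as [Hb Hnd].
  destruct (Nat.eqb_spec v b) as [<-|Hvb].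
  - rewrite (lsum_ext l _ (fun x => 0 * (if Nat.eqb v x then a else 0))), lsum_scal;
      [ring|].
    intros x Hx. destruct (Nat.eqb_spec v x); [congruence|ring].
  - destruct Hv as [|Hv]; [congruence|]. rewrite IH; auto; ring.
Qed.

Lemma lsum_le_two_levels l g (p : nat -> bool) a b (D C : nat) : 0 <= a <= b ->
  (forall u, In u l -> p u = true -> g u <= b) -> (forall u, In u l -> p u = false -> g u <= a) ->
  (length l <= D)%nat -> (length (filter p l) <= C)%nat ->
  lsum l g <= INR D * a + INR C * (b - a).
Proof.
  intros Hab Hb Ha HD HC.
  assert (Hcount : lsum l g <= INR (length l) * a + INR (length (filter p l)) * (b - a)).
  { clear HD HC. induction l as [|x l IH]; rewrite ?lsum_nil, ?lsum_cons; [simpl; lra|].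
    change (length (x :: l)) with (S (length l)). rewrite S_INR. cbn [filter].
    assert (IH' : lsum l g <= INR (length l) * a + INR (length (filter p l)) * (b - a))
      by (apply IH; intros; [apply Hb|apply Ha]; auto; now right).
    destruct (p x) eqn:E.
    - change (length (x :: filter p l)) with (S (length (filter p l))). rewrite S_INR.
      pose proof (Hb x (or_introl eq_refl) E). lra.
    - pose proof (Ha x (or_introl eq_refl) E). lra. }
  apply le_INR in HD, HC. nra.
Qed.

Lemma filter_length_le_incl (l S : list nat) (p : nat -> bool) : NoDup l ->
  (forall u, In u l -> p u = true -> In u S) -> (length (filter p l) <= length S)%nat.
Proof.
  intros Hnd H. apply NoDup_incl_length; [now apply NoDup_filter|].
  intros u Hu. apply filter_In in Hu as [Hu Hp]. auto.
Qed.

Lemma exists_argmax_below (g : nat -> R) n : (0 < n)%nat ->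
  exists i, (i < n)%nat /\ forall j, (j < n)%nat -> g j <= g i.
Proof.
  induction n as [|[|n] IH]; intro Hn; [lia| |].
  - exists 0%nat; split; [lia|]. intros j Hj. replace j with 0%nat by lia. lra.
  - destruct IH as [i [Hi Hm]]; [lia|].
    destruct (Rle_dec (g (S n)) (g i)).
    + exists i; split; [lia|]. intros j Hj.
      destruct (Nat.eq_dec j (S n)) as [->|]; [auto|apply Hm; lia].
    + exists (S n); split; [lia|]. intros j Hj.
      destruct (Nat.eq_dec j (S n)) as [->|]; [lra|]. specialize (Hm j ltac:(lia)). lra.
Qed.

(* Collatz-Wielandt: evaluate the eigen-equation at a coordinate maximising [|x_j| / y_j]. *)
Lemma eigenvalue_lt_of_supersolution n (M : nat -> nat -> R) (y : nat -> R) B l :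
  (forall i j, (i < n)%nat -> (j < n)%nat -> 0 <= M i j) ->
  (forall i, (i < n)%nat -> 0 < y i) ->
  (forall i, (i < n)%nat -> rsum n (fun j => M i j * y j) < B * y i) ->
  is_eigenvalue n M l -> l < B.
Proof.
  intros HM Hy HB [x [[i0 [Hi0 Hx0]] Hx]].
  destruct (exists_argmax_below (fun j => Rabs (x j) / y j) n ltac:(lia)) as [i [Hi Hm]].
  set (t := Rabs (x i) / y i) in Hm.
  assert (Hyi := Hy i Hi).
  assert (Ht : 0 < t).
  { specialize (Hm i0 Hi0). simpl in Hm.
    assert (0 < Rabs (x i0) / y i0) by (apply Rdiv_lt_0_compat; [now apply Rabs_pos_lt|auto]).
    lra. }
  assert (Hxj : forall j, (j < n)%nat -> Rabs (x j) <= t * y j).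
  { intros j Hj. specialize (Hm j Hj). simpl in Hm. assert (Hyj := Hy j Hj).
    apply (Rmult_le_compat_r (y j)) in Hm; [|lra].
    unfold Rdiv in Hm. rewrite Rmult_assoc, Rinv_l in Hm; lra. }
  assert (Hxi : Rabs (x i) = t * y i) by (unfold t; field; lra).
  assert (Hrow : Rabs l * Rabs (x i) <= t * rsum n (fun j => M i j * y j)).
  { rewrite <- Rabs_mult, <- Hx; auto.
    change (rsum n ?f) with (lsum (seq 0 n) f).
    eapply Rle_trans; [apply Rabs_lsum_le|]. rewrite <- lsum_scal. apply lsum_le.
    intros j Hj. apply in_seq in Hj. rewrite Rabs_mult, Rabs_pos_eq by (apply HM; lia).
    specialize (Hxj j ltac:(lia)). specialize (HM i j Hi ltac:(lia)). nra. }
  specialize (HB i Hi). rewrite Hxi in Hrow.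
  assert (Rabs l * (t * y i) < B * (t * y i)) by nra.
  apply Rmult_lt_reg_r in H; [|nra].
  pose proof (Rle_abs l). lra.
Qed.

Lemma A_alpha_nonneg n adj alpha i j : 0 <= alpha <= 1 -> 0 <= A_alpha n adj alpha i j.
Proof.
  intro Ha. unfold A_alpha.
  assert (0 <= (if Nat.eqb i j then INR (degree n adj i) else 0))
    by (destruct (Nat.eqb i j); [apply pos_INR|lra]).
  assert (0 <= (if adj i j then 1 else 0)) by (destruct (adj i j); lra).
  nra.
Qed.

Lemma rsum_A_alpha_row n adj alpha (y : nat -> R) v : (v < n)%nat ->
  rsum n (fun j => A_alpha n adj alpha v j * y j) =
  alpha * INR (degree n adj v) * y v + (1 - alpha) * lsum (filter (adj v) (seq 0 n)) y.
Proof.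
  intro Hv. change (rsum n ?f) with (lsum (seq 0 n) f).
  rewrite (lsum_ext _ _ (fun j => (if Nat.eqb v j then alpha * INR (degree n adj v) * y v else 0)
     + (1 - alpha) * ((if adj v j then 1 else 0) * y j))).
  - rewrite lsum_plus, lsum_scal, lsum_indicator, lsum_delta; auto;
      [apply seq_NoDup|apply in_seq; lia].
  - intros j _. unfold A_alpha. destruct (Nat.eqb_spec v j); [subst|]; ring.
Qed.

Lemma degree_le_incl n adj v (S : list nat) : (forall u, adj v u = true -> In u S) ->
  (degree n adj v <= length S)%nat.
Proof.
  intro H. apply filter_length_le_incl; [apply seq_NoDup|]. auto.
Qed.

(* The rows of [A_alpha] at the test vector [F (depth v)] for a vertex of depth [0], of depth
   [0 < d < k - 1] and of depth [k - 1] in the extremal case: every vertex has degree 3, a cycle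
   vertex has two neighbours of depth 0 and an interior vertex a single parent. *)
Definition depth_profile (alpha B : R) (k : nat) (F : nat -> R) : Prop :=
  (forall i j, (i <= j)%nat -> F j <= F i) /\
  (forall i, (i <= k - 1)%nat -> 0 < F i) /\
  3 * alpha * F 0%nat + (1 - alpha) * (2 * F 0%nat + F 1%nat) < B * F 0%nat /\
  (forall d, (1 <= d)%nat -> (d + 1 < k)%nat ->
     3 * alpha * F d + (1 - alpha) * (F (d - 1)%nat + 2 * F (d + 1)%nat) < B * F d) /\
  alpha * F (k - 1)%nat + (1 - alpha) * F (k - 2)%nat < B * F (k - 1)%nat.

Section RowBound.

Variables (n : nat) (adj : nat -> nat -> bool) (c : list nat) (k : nat) (alpha B : R).
Variable F : nat -> R.
Hypothesis G_simple : simple_graph n adj.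
Hypothesis G_connected : connected n adj.
Hypothesis c_cycle : is_cycle adj c.
Hypothesis c_unique : unique_cycle adj c.
Hypothesis c_k : kG adj c k.
Hypothesis G_max_degree : max_degree n adj 3.
Hypothesis alpha_range : 0 < alpha < 1.
Hypothesis k_ge2 : (2 <= k)%nat.
Hypothesis F_profile : depth_profile alpha B k F.

Let y (j : nat) : R := F (depth adj c j).

Lemma row_le_two_levels v (p : nat -> bool) a b (D : nat) (S : list nat) :
  (v < n)%nat -> 0 <= a <= b -> (degree n adj v <= D)%nat ->
  (forall u, adj v u = true -> p u = true -> y u <= b /\ In u S) ->
  (forall u, adj v u = true -> p u = false -> y u <= a) ->
  rsum n (fun j => A_alpha n adj alpha v j * y j) <=
  alpha * INR D * y v + (1 - alpha) * (INR D * a + INR (length S) * (b - a)).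
Proof.
  intros Hv Hab HD Hp Hnp.
  assert (Hyv : 0 < y v)
    by (apply (proj1 (proj2 F_profile)), (depth_le_k n adj c); auto).
  rewrite rsum_A_alpha_row by exact Hv.
  assert (Hsum : lsum (filter (adj v) (seq 0 n)) y <= INR D * a + INR (length S) * (b - a)).
  { apply (lsum_le_two_levels _ _ p); [exact Hab| | |exact HD|].
    - intros u Hu Hpu. apply filter_In in Hu as [_ Hu]. exact (proj1 (Hp u Hu Hpu)).
    - intros u Hu Hpu. apply filter_In in Hu as [_ Hu]. exact (Hnp u Hu Hpu).
    - apply filter_length_le_incl; [apply NoDup_filter, seq_NoDup|].
      intros u Hu Hpu. apply filter_In in Hu as [_ Hu]. exact (proj2 (Hp u Hu Hpu)). }
  apply le_INR in HD.
  apply Rplus_le_compat; [|apply Rmult_le_compat_l; lra].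
  apply Rmult_le_compat_r; [lra|]. apply Rmult_le_compat_l; lra.
Qed.

Lemma row_lt_depth0 v : (v < n)%nat -> depth adj c v = 0%nat ->
  rsum n (fun j => A_alpha n adj alpha v j * y j) < B * y v.
Proof.
  intros Hv H0. destruct F_profile as [Fdec [Fpos [Hrow0 _]]].
  destruct (cycle_vertex_neighbours n adj c G_simple G_connected c_cycle c_unique v)
    as [a [b Hab]]; [now apply (depth_eq0_iff n adj c)|].
  eapply Rle_lt_trans.
  - apply (row_le_two_levels v (fun u => Nat.eqb (depth adj c u) 0) (F 1%nat) (F 0%nat) 3 [a; b]);
      auto.
    + split; [apply Rlt_le, Fpos; lia|apply Fdec; lia].
    + apply G_max_degree. exact Hv.
    + intros u Hvu Hu. apply Nat.eqb_eq in Hu. unfold y. rewrite Hu. split; [lra|].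
      destruct (Hab u Hvu Hu) as [-> | ->]; simpl; auto.
    + intros u _ Hu. apply Nat.eqb_neq in Hu. apply Fdec. lia.
  - unfold y. rewrite H0. simpl (length [a; b]). simpl (INR 3). simpl (INR 2). lra.
Qed.

Lemma row_lt_interior v : (v < n)%nat -> (1 <= depth adj c v)%nat -> (depth adj c v + 1 < k)%nat ->
  rsum n (fun j => A_alpha n adj alpha v j * y j) < B * y v.
Proof.
  intros Hv Hd1 Hdk. destruct F_profile as [Fdec [Fpos [_ [Hrow _]]]].
  pose proof G_simple as [Hs [_ Hb]].
  set (d := depth adj c v) in *.
  destruct (depth_parent_unique n adj c G_simple G_connected c_cycle c_unique v Hv Hd1) as [w Hw].
  assert (Hvc : ~ In v c) by (intro H; apply (depth_eq0_iff n adj c) in H; auto; lia).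
  assert (Hnb : forall u, adj v u = true -> (d <= depth adj c u + 1)%nat).
  { intros u Hvu. apply (depth_le_succ n adj c); auto; [exact (proj2 (Hb v u Hvu))|].
    apply del_cycle_off_cycle; [now rewrite Hs|auto]. }
  eapply Rle_lt_trans.
  - apply (row_le_two_levels v (fun u => Nat.leb (depth adj c u) d)
      (F (d + 1)%nat) (F (d - 1)%nat) 3 [w]); auto.
    + split; [apply Rlt_le, Fpos; lia|apply Fdec; lia].
    + apply G_max_degree. exact Hv.
    + intros u Hvu Hu. apply Nat.leb_le in Hu. split; [apply Fdec; specialize (Hnb u Hvu); lia|].
      rewrite (Hw u Hvu Hu). now left.
    + intros u _ Hu. apply Nat.leb_gt in Hu. apply Fdec. lia.
  - specialize (Hrow d Hd1 Hdk). simpl (length [w]). simpl (INR 1). simpl (INR 3).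
    unfold y. fold d. lra.
Qed.

Lemma row_lt_last_layer v : (v < n)%nat -> depth adj c v = (k - 1)%nat ->
  rsum n (fun j => A_alpha n adj alpha v j * y j) < B * y v.
Proof.
  intros Hv Hd. destruct F_profile as [Fdec [Fpos [_ [_ Hrow]]]].
  pose proof G_simple as [Hs [_ Hb]].
  assert (Hd1 : (1 <= depth adj c v)%nat) by lia.
  destruct (depth_parent_unique n adj c G_simple G_connected c_cycle c_unique v Hv Hd1) as [w Hw].
  assert (Hvc : ~ In v c) by (intro H; apply (depth_eq0_iff n adj c) in H; auto; lia).
  assert (Hnb : forall u, adj v u = true ->
            (k - 2 <= depth adj c u)%nat /\ (depth adj c u <= depth adj c v)%nat).
  { intros u Hvu. assert (Hu : (u < n)%nat) by exact (proj2 (Hb v u Hvu)). split.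
    - enough (depth adj c v <= depth adj c u + 1)%nat by lia.
      apply (depth_le_succ n adj c); auto.
      apply del_cycle_off_cycle; [now rewrite Hs|auto].
    - rewrite Hd. now apply (depth_le_k n adj c). }
  eapply Rle_lt_trans.
  - apply (row_le_two_levels v (fun _ => true) 0 (F (k - 2)%nat) 1 [w]); auto.
    + split; [lra|apply Rlt_le, Fpos; lia].
    + apply (degree_le_incl n adj v [w]). intros u Hvu.
      rewrite (Hw u Hvu (proj2 (Hnb u Hvu))). now left.
    + intros u Hvu _. split; [apply Fdec, (proj1 (Hnb u Hvu))|].
      rewrite (Hw u Hvu (proj2 (Hnb u Hvu))). now left.
    + discriminate.
  - simpl (length [w]). simpl (INR 1). unfold y. rewrite Hd. lra.
Qed.

Lemma A_alpha_supersolution v : (v < n)%nat ->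
  rsum n (fun j => A_alpha n adj alpha v j * y j) < B * y v.
Proof.
  intro Hv. assert (depth adj c v <= k - 1)%nat by (apply (depth_le_k n adj c); auto).
  destruct (Nat.eq_dec (depth adj c v) 0) as [H0|H0]; [now apply row_lt_depth0|].
  destruct (Nat.lt_ge_cases (depth adj c v + 1) k).
  - apply row_lt_interior; auto; lia.
  - apply row_lt_last_layer; auto; lia.
Qed.

Lemma A_alpha_eigenvalue_lt l : is_eigenvalue n (A_alpha n adj alpha) l -> l < B.
Proof.
  apply eigenvalue_lt_of_supersolution with (y := y).
  - intros i j _ _. apply A_alpha_nonneg. lra.
  - intros i Hi. apply (proj1 (proj2 F_profile)), (depth_le_k n adj c); auto.
  - exact A_alpha_supersolution.
Qed.

End RowBound.

Lemma Wmat_eigen_relation delta lam : is_eigenvalue 2 (Wmat delta) lam ->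
  delta * (lam - 2) + 1 = lam * (lam - 2).
Proof.
  intros [x [[i0 [Hi0 Hx0]] Hx]].
  pose proof (Hx 0%nat ltac:(lia)) as e0. pose proof (Hx 1%nat ltac:(lia)) as e1.
  unfold rsum in e0, e1. simpl in e0, e1.
  assert (Hx1 : x 1%nat <> 0).
  { intro H. rewrite H in e1. assert (x 0%nat = 0) by lra.
    destruct i0 as [|[|i0]]; [congruence|congruence|lia]. }
  apply (Rmult_eq_reg_r (x 1%nat)); auto.
  replace (x 0%nat) with ((lam - 2) * x 1%nat) in e0 by lra. nra.
Qed.

Lemma Zmat_eigen_relation gamma lam : is_eigenvalue 3 (Zmat gamma) lam ->
  gamma * (lam * (lam - 2) - 1) + 2 * (lam - 2) = lam * (lam * (lam - 2) - 1).
Proof.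
  intros [x [[i0 [Hi0 Hnz]] Hx]].
  pose proof (Hx 0%nat ltac:(lia)) as e0. pose proof (Hx 1%nat ltac:(lia)) as e1.
  pose proof (Hx 2%nat ltac:(lia)) as e2.
  unfold rsum in e0, e1, e2. simpl in e0, e1, e2.
  pose proof (sqrt_sqrt 2 ltac:(lra)) as Hs.
  assert (Hx1 : x 1%nat = (lam - 2) * x 2%nat) by lra.
  assert (Hx0 : sqrt 2 * x 0%nat = (lam * (lam - 2) - 1) * x 2%nat) by (rewrite Hx1 in e1; nra).
  assert (Hx2 : x 2%nat <> 0).
  { intro H. rewrite H in Hx1, Hx0. rewrite Rmult_0_r in Hx0.
    apply Rmult_integral in Hx0 as [Hs0|Hx0']; [rewrite Hs0 in Hs; lra|].
    destruct i0 as [|[|[|i0]]]; [congruence|lra|congruence|lia]. }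
  apply (Rmult_eq_reg_r (x 2%nat)); auto.
  assert (E0 : sqrt 2 * (gamma * x 0%nat + sqrt 2 * x 1%nat) = sqrt 2 * (lam * x 0%nat))
    by (f_equal; lra).
  assert (Eg : gamma * (sqrt 2 * x 0%nat) = gamma * ((lam * (lam - 2) - 1) * x 2%nat))
    by now rewrite Hx0.
  assert (El : lam * (sqrt 2 * x 0%nat) = lam * ((lam * (lam - 2) - 1) * x 2%nat))
    by now rewrite Hx0.
  assert (Es : sqrt 2 * sqrt 2 * x 1%nat = 2 * x 1%nat) by now rewrite Hs.
  lra.
Qed.

Lemma alpha_threshold t alpha : t < 2 -> alpha > - t / (2 - t) -> 0 < 2 * alpha + (1 - alpha) * t.
Proof.
  intros Ht Ha.
  apply (Rmult_lt_compat_r (2 - t)) in Ha; [|lra].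
  unfold Rdiv in Ha. rewrite Rmult_assoc, Rinv_l in Ha by lra. lra.
Qed.

Lemma depth_profile_k2 alpha delta lam : 2 < lam < 3 -> 0 < alpha < 1 ->
  delta * (lam - 2) + 1 = lam * (lam - 2) -> alpha > - delta / (2 - delta) ->
  exists F, depth_profile alpha (3 * alpha + (1 - alpha) * lam) 2 F.
Proof.
  intros Hl Ha Hrel Halpha.
  assert (Hkey : 0 < 2 * alpha + (1 - alpha) * delta) by (apply alpha_threshold; nra).
  set (b := 1 - alpha) in *. assert (Hb : 0 < b) by (unfold b; lra).
  set (W := 2 * alpha + b * lam). assert (HW : 0 < W) by (unfold W; nra).
  (* [F 1] must lie in (b / W, lam - 2), which is non-empty by the eigen-relation of [Wmat]. *)
  assert (Hgap : b / W < lam - 2).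
  { apply (Rmult_lt_reg_r W); auto. unfold Rdiv. rewrite Rmult_assoc, Rinv_l by lra.
    assert (E : (lam - 2) * W - b = (lam - 2) * (2 * alpha + b * delta))
      by (unfold W; rewrite <- (Rmult_1_r b) at 3; nra).
    nra. }
  assert (HbW : 0 < b / W) by (apply Rdiv_lt_0_compat; lra).
  assert (HWf : W * (b / W) = b) by (field; lra).
  set (f := (b / W + (lam - 2)) / 2).
  assert (Hf : b / W < f < lam - 2) by (unfold f; lra).
  exists (fun i => match i with 0%nat => 1 | 1%nat => f | _ => 0 end).
  repeat split.
  - intros i j Hij. destruct i as [|[|i]], j as [|[|j]]; try lra; lia.
  - intros i Hi. destruct i as [|[|i]]; try lra; simpl in Hi; lia.
  - assert (b * f < b * (lam - 2)) by (apply Rmult_lt_compat_l; lra). simpl. fold b. lra.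
  - intros d Hd1 Hd2. lia.
  - assert (W * (b / W) < W * f) by (apply Rmult_lt_compat_l; lra).
    simpl. fold b. unfold W in *. lra.
Qed.

(* [F 2 = 1], and [F 0] is chosen in (F 1 / (lam - 2), lam * F 1 - 2). *)
Lemma depth_profile_k3_of alpha lam F1 : 0 < alpha < 1 -> 2 < lam < 3 -> 1 < F1 ->
  2 * (lam - 2) < (lam * (lam - 2) - 1) * F1 ->
  (1 - alpha) * F1 < 2 * alpha + (1 - alpha) * lam ->
  exists F, depth_profile alpha (3 * alpha + (1 - alpha) * lam) 3 F.
Proof.
  intros Ha Hl HF1 Hlow Hup.
  set (m := F1 / (lam - 2)). assert (Hm : m * (lam - 2) = F1) by (unfold m; field; lra).
  assert (Hm2 : m < lam * F1 - 2) by nra.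
  set (F0 := (m + (lam * F1 - 2)) / 2).
  assert (HF0 : F1 < (lam - 2) * F0)
    by (assert ((lam - 2) * m < (lam - 2) * F0) by (apply Rmult_lt_compat_l; unfold F0; lra); lra).
  assert (HF01 : F1 <= F0) by nra.
  exists (fun i => match i with 0%nat => F0 | 1%nat => F1 | 2%nat => 1 | _ => 0 end).
  repeat split.
  - intros i j Hij. destruct i as [|[|[|i]]], j as [|[|[|j]]]; simpl; try lra; lia.
  - intros i Hi. destruct i as [|[|[|i]]]; simpl; try lra; simpl in Hi; lia.
  - assert ((1 - alpha) * F1 < (1 - alpha) * ((lam - 2) * F0)) by (apply Rmult_lt_compat_l; lra).
    simpl. lra.
  - intros d Hd1 Hd2. destruct d as [|[|d]]; try lia.
    assert ((1 - alpha) * (F0 + 2) < (1 - alpha) * (lam * F1))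
      by (apply Rmult_lt_compat_l; unfold F0; lra).
    simpl. lra.
  - simpl. lra.
Qed.

Lemma depth_profile_k3 alpha gamma lam : 1 + sqrt 2 < lam < 3 -> 0 < alpha < 1 ->
  gamma * (lam * (lam - 2) - 1) + 2 * (lam - 2) = lam * (lam * (lam - 2) - 1) ->
  alpha > - gamma / (2 - gamma) ->
  exists F, depth_profile alpha (3 * alpha + (1 - alpha) * lam) 3 F.
Proof.
  intros Hl Ha Hrel Halpha.
  pose proof (sqrt_sqrt 2 ltac:(lra)) as Hs. pose proof (sqrt_pos 2) as Hs0.
  set (P := lam * (lam - 2) - 1) in *.
  assert (HP : 0 < P < 2).
  { assert (0 < (lam - 1 - sqrt 2) * (lam - 1 + sqrt 2)) by (apply Rmult_lt_0_compat; lra).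
    assert (0 < (3 - lam) * (lam + 1)) by (apply Rmult_lt_0_compat; lra).
    unfold P. split; nra. }
  assert (Hl2 : 2 < lam) by nra.
  assert (Hg2 : gamma < 2).
  { assert (E : (2 - gamma) * P = (lam - 2) * (2 - P)) by lra.
    assert (0 < (lam - 2) * (2 - P)) by (apply Rmult_lt_0_compat; lra). nra. }
  assert (Hkey : 0 < 2 * alpha + (1 - alpha) * gamma) by (apply alpha_threshold; auto).
  set (b := 1 - alpha) in *. assert (Hb : 0 < b) by (unfold b; lra).
  set (W := 2 * alpha + b * lam).
  (* [F 1] must lie in (L, U), which is non-empty by the eigen-relation of [Zmat]. *)
  set (U := W / b). assert (HU : U * b = W) by (unfold U; field; lra).
  set (L := 2 * (lam - 2) / P). assert (HL : L * P = 2 * (lam - 2)) by (unfold L; field; lra).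
  assert (HL1 : 1 < L).
  { assert (0 < (3 - lam) * (lam - 1)) by (apply Rmult_lt_0_compat; lra).
    assert (P < 2 * (lam - 2)) by (unfold P; nra).
    apply (Rmult_lt_reg_r P); lra. }
  assert (HLU : L < U).
  { assert (E : W * P - 2 * (lam - 2) * b = P * (2 * alpha + b * gamma)) by (unfold W; nra).
    assert (Hd : (U - L) * (b * P) = P * (2 * alpha + b * gamma))
      by (rewrite <- E, <- HU, <- HL; ring).
    assert (0 < P * (2 * alpha + b * gamma)) by (apply Rmult_lt_0_compat; lra).
    assert (0 < b * P) by (apply Rmult_lt_0_compat; lra).
    nra. }
  apply (depth_profile_k3_of alpha lam ((L + U) / 2)); try lra; fold b P.
  - assert (L * P < (L + U) / 2 * P) by (apply Rmult_lt_compat_r; lra). lra.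
  - assert (b * ((L + U) / 2) < b * U) by (apply Rmult_lt_compat_l; lra).
    unfold W in HU. lra.
Qed.

Lemma lambda5_bounds : 2 < 2 * sqrt 2 * cos (PI / 5) < 3.
Proof.
  pose proof (sqrt_sqrt 2 ltac:(lra)) as Hs. pose proof (sqrt_pos 2) as Hs0.
  assert (Hc : cos (PI / 4) < cos (PI / 5))
    by (pose proof PI_RGT_0; apply cos_decreasing_1; lra).
  rewrite cos_PI4 in Hc.
  assert (E : 1 / sqrt 2 = sqrt 2 / 2) by (field_simplify_eq; nra).
  pose proof (COS_bound (PI / 5)). split; nra.
Qed.

Lemma lambda7_bounds : 1 + sqrt 2 < 2 * sqrt 2 * cos (PI / 7) < 3.
Proof.
  pose proof (sqrt_sqrt 2 ltac:(lra)) as Hs2. pose proof (sqrt_pos 2) as Hs2'.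
  pose proof (sqrt_sqrt 3 ltac:(lra)) as Hs3. pose proof (sqrt_pos 3) as Hs3'.
  assert (Hc : cos (PI / 6) < cos (PI / 7))
    by (pose proof PI_RGT_0; apply cos_decreasing_1; lra).
  rewrite cos_PI6 in Hc.
  assert (H6 : sqrt 2 * sqrt 3 > 1 + sqrt 2).
  { assert (E : (sqrt 2 * sqrt 3) * (sqrt 2 * sqrt 3) = 6)
      by (transitivity ((sqrt 2 * sqrt 2) * (sqrt 3 * sqrt 3)); [ring|rewrite Hs2, Hs3; ring]).
    assert (0 <= sqrt 2 * sqrt 3) by nra.
    assert (sqrt 2 < 3 / 2) by nra.
    nra. }
  pose proof (COS_bound (PI / 7)). split; nra.
Qed.

Theorem mainTheorem12 (n : nat) (adj : nat -> nat -> bool) (alpha gamma0 delta0 : R)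
  (k : nat) :
  simple_graph n adj ->
  unicyclic n adj ->
  max_degree n adj 3 ->
  0 < alpha < 1 ->
  is_rho 3 (Zmat gamma0) (2 * sqrt 2 * cos (PI / 7)) ->
  is_rho 2 (Wmat delta0) (2 * sqrt 2 * cos (PI / 5)) ->
  k_of adj k ->
  ((k = 3%nat /\ alpha > - gamma0 / (2 - gamma0)) \/
   (k = 2%nat /\ alpha > - delta0 / (2 - delta0))) ->
  forall r, is_rho n (A_alpha n adj alpha) r ->
    r < 3 * alpha + 2 * (1 - alpha) * sqrt 2 * cos (PI / (2 * INR k + 1)).
Proof.
  intros Hg [Hcon [c0 [Hc0 U0]]] Hmax Ha [HZ _] [HW _] [c [Hc Hk]] Hcase r [Hr _].
  assert (U : unique_cycle adj c)
    by (intros c' Hc' x y; now rewrite (U0 c' Hc'), (U0 c Hc)).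
  destruct Hcase as [[-> Halpha]|[-> Halpha]].
  - replace (2 * INR 3 + 1) with 7 by (simpl; lra).
    destruct (depth_profile_k3 alpha gamma0 _ lambda7_bounds Ha (Zmat_eigen_relation _ _ HZ) Halpha)
      as [F HF].
    replace (3 * alpha + 2 * (1 - alpha) * sqrt 2 * cos (PI / 7))
      with (3 * alpha + (1 - alpha) * (2 * sqrt 2 * cos (PI / 7))) by ring.
    apply (A_alpha_eigenvalue_lt n adj c 3 alpha _ F); auto.
  - replace (2 * INR 2 + 1) with 5 by (simpl; lra).
    destruct (depth_profile_k2 alpha delta0 _ lambda5_bounds Ha (Wmat_eigen_relation _ _ HW) Halpha)
      as [F HF].
    replace (3 * alpha + 2 * (1 - alpha) * sqrt 2 * cos (PI / 5))
      with (3 * alpha + (1 - alpha) * (2 * sqrt 2 * cos (PI / 5))) by ring.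
    apply (A_alpha_eigenvalue_lt n adj c 2 alpha _ F); auto.
Qed.
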